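(* Let $V$ be a finite-dimensional module over $\mathrm{QAWA}_2(A_R;z)$. Then every eigenvalue (in $\mathbb{K}$) of $x_2$ on $V$ is either an eigenvalue $\lambda$ of $x_1$ on $V$, or of the form $\gamma\lambda$ for some $\gamma\in\Gamma_R$ and some eigenvalue $\lambda$ of $x_1$ on $V$.
   Context: Let $\Bbbk$ be a commutative ring, $z\in\Bbbk^\times$, and $A$ a symmetric Frobenius superalgebra over $\Bbbk$ with even trace $\mathrm{tr}$, homogeneous basis $B_A$ and dual basis $\{b^\vee\}$, $\mathrm{tr}(b^\vee c)=\delta_{b,c}$. Let $\mathbb{K}\supseteq\Bbbk$ be an algebraically closed field and $R$ a finite-dimensional supercommutative superalgebra over $\mathbb{K}$; set $A_R:=R\otimes_\Bbbk A$ (a symmetric Frobenius superalgebra over $R$ with trace $\mathrm{id}\otimes\mathrm{tr}$). $\mathrm{QAWA}_2(A_R;z)$ is the $R$-superalgebra generated by $A_R\otimes_RA_R$ (factors numbered right to left, $a^{(1)}=1\otimes a$, $a^{(2)}=a\otimes1$), commuting even invertible $x_1,x_2$, and even $\sigma_1$, with relations $\sigma_1^2=z\tau_1\sigma_1+1$ where $\tau_1:=\sum_{b\in B_A}b\otimes b^\vee$, $\sigma_1\mathbf a=s_1(\mathbf a)\sigma_1$ ($s_1$ the superswap of the two factors), $\sigma_1x_1\sigma_1=x_2$, $x_i\mathbf a=\mathbf ax_i$. Let $m(w)\in\mathbb{K}[w]$ be the minimal polynomial of the $\mathbb{K}$-linear endomorphism of $A_R\otimes_RA_R$ given by left multiplication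 by $z\tau_1$. $\Gamma_R$ is the subgroup of $\mathbb{K}^\times$ generated by $\{\mu/(\mu-\eta):\mu,\eta\in\mathbb{K},\ m(\eta)=0,\ \mu^2-\mu\eta-1=0\}$. *)

From HB Require Import structures.
From mathcomp Require Import all_boot all_order all_algebra.
Set Implicit Arguments.
Unset Strict Implicit.
Unset Printing Implicit Defensive.
Import Order.TTheory GRing.Theory.
Local Open Scope ring_scope.

(* A (free, finite rank) superalgebra over a commutative ring T, given by a
   homogeneous basis indexed by the finType I:
     b_i b_j = \sum_l smul i j l b_l,   1 = \sum_l sone l b_l,
   and spar i = parity of b_i (true = odd). *)
Record salg (T : Type) (I : finType) := SAlg {
  spar : I -> bool;
  smul : I -> I -> I -> T;
  sone : I -> T }.

Definition sgn {T : pzRingType} (b : bool) : T := (-1) ^+ b.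

Definition is_salg (T : comNzRingType) (I : finType) (A : salg T I) : Prop :=
  [/\ (forall i j k l : I,
        \sum_m smul A i j m * smul A m k l = \sum_m smul A j k m * smul A i m l),
      (forall j l : I, \sum_m sone A m * smul A m j l = (j == l)%:R),
      (forall j l : I, \sum_m sone A m * smul A j m l = (j == l)%:R),
      (forall i j l : I, smul A i j l != 0 -> spar A l = spar A i (+) spar A j)
    & (forall l : I, sone A l != 0 -> spar A l = false)].

Definition is_supercomm (T : comNzRingType) (I : finType) (A : salg T I) : Prop :=
  forall i j l : I, smul A i j l = sgn (spar A i && spar A j) * smul A j i l.

(* tr (b_i b_j) for a trace given by its values tr_l = tr(b_l) *)
Definition trprod (T : comNzRingType) (I : finType) (A : salg T I) (tr : I -> T)
  (i j : I) : T := \sum_l smul A i j l * tr l.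

(* A is a symmetric Frobenius superalgebra with even trace tr and dual basis
   b_i^vee = \sum_l D i l b_l, i.e. tr(b_i^vee b_j) = delta_{ij}. *)
Definition is_symfrob (T : comNzRingType) (I : finType) (A : salg T I)
  (tr : I -> T) (D : I -> I -> T) : Prop :=
  [/\ is_salg A,
      (forall l : I, spar A l -> tr l = 0),
      (forall i j : I, trprod A tr i j = sgn (spar A i && spar A j) * trprod A tr j i)
    & (forall i j : I, \sum_l D i l * trprod A tr l j = (i == j)%:R)].

Section Tensor.
Variables (K : fieldType) (k : comNzRingType) (f : k -> K).
Variables (IR IA : finType) (R : salg K IR) (A : salg k IA).

(* Basis of A_R (x)_R A_R  ~=  R (x)_K A_K (x)_K A_K : the element (s,i,j)
   stands for e_s (x) b_i (x) b_j, i.e. (e_s (x) b_i) (x) (1 (x) b_j), so b_i is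
   in the left factor (position 2) and b_j in the right one (position 1). *)
Definition J := (IR * IA * IA)%type.

Local Notation AA := {ffun J -> K}.

Definition AAconst (a b c : J) : K :=
  let: (s, i, j) := a in let: (t, k', l) := b in let: (u, m, o) := c in
  sgn (spar R t && (spar A i (+) spar A j)) * sgn (spar A k' && spar A j) *
  smul R s t u * f (smul A i k' m) * f (smul A j l o).

Definition AAmul (x y : AA) : AA :=
  [ffun c => \sum_a \sum_b x a * y b * AAconst a b c].

Definition AAone : AA :=
  [ffun c : J => let: (u, m, o) := c in sone R u * f (sone A m) * f (sone A o)].

(* tau_1 = sum_b b (x) b^vee *)
Definition AAtau (D : IA -> IA -> k) : AA :=
  [ffun c : J => let: (u, m, o) := c in sone R u * f (D m o)].

Definition AAztau (z : k) (D : IA -> IA -> k) : AA :=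
  [ffun c : J => f z * AAtau D c].

Definition AAswap (x : AA) : AA :=
  [ffun c : J => let: (u, m, o) := c in
     sgn (spar A m && spar A o) * x (u, o, m)].

Definition AAeval (c : AA) (p : {poly K}) (x : AA) : AA :=
  [ffun e => \sum_(n < size p) p`_n * iter n (AAmul c) x e].

Definition is_minpoly_lmul (c : AA) (m : {poly K}) : Prop :=
  [/\ m \is monic,
      (forall x, AAeval c m x = 0)
    & (forall p : {poly K}, (forall x, AAeval c p x = 0) -> (m %| p)%R)].

Definition rhoE (d : nat) (rho : J -> 'M[K]_d) (x : AA) : 'M[K]_d :=
  \sum_a x a *: rho a.

(* V = K^d (column vectors) is a left module over QAWA_2(A_R; z), given by the
   action rho of A_R (x)_R A_R and the matrices of x_1, x_2, sigma_1. *)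
Definition is_QAWA2_module (z : k) (D : IA -> IA -> k) (d : nat)
  (rho : J -> 'M[K]_d) (X1 X2 S : 'M[K]_d) : Prop :=
  [/\ rhoE rho AAone = 1%:M
      /\ (forall x y : AA, rhoE rho (AAmul x y) = rhoE rho x *m rhoE rho y),
      S *m S = f z *: (rhoE rho (AAtau D) *m S) + 1%:M,
      (forall x : AA, S *m rhoE rho x = rhoE rho (AAswap x) *m S),
      S *m X1 *m S = X2
    & [/\ X1 \in unitmx, X2 \in unitmx, X1 *m X2 = X2 *m X1
        & (forall x : AA, X1 *m rhoE rho x = rhoE rho x *m X1 /\
                          X2 *m rhoE rho x = rhoE rho x *m X2)]].
End Tensor.

Definition is_eigval (K : fieldType) (d : nat) (M : 'M[K]_d) (a : K) : Prop :=
  exists2 v : 'cV[K]_d, v != 0 & M *m v = a *: v.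

Inductive in_gen_subgroup (K : fieldType) (G0 : K -> Prop) : K -> Prop :=
| igs_one : in_gen_subgroup G0 1
| igs_mul : forall g x, G0 g -> in_gen_subgroup G0 x -> in_gen_subgroup G0 (g * x)
| igs_inv : forall g x, G0 g -> in_gen_subgroup G0 x -> in_gen_subgroup G0 (g^-1 * x).

Definition GammaGen (K : fieldType) (m : {poly K}) (g : K) : Prop :=
  exists mu eta : K, [/\ root m eta, mu ^+ 2 - mu * eta - 1 = 0 & g = mu / (mu - eta)].

Definition Gamma (K : fieldType) (m : {poly K}) : K -> Prop :=
  in_gen_subgroup (GammaGen m).

(* X1, X2 and T = z tau_1 commute, so over the algebraically
   closed field an eigenvector v of X2 for mu can be chosen to be a common
   eigenvector, with eigenvalues lam for X1 and eta for T; eta is a root of m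
   because m annihilates left multiplication by z tau_1.  The quadratic relation
   S^2 = T S + 1 gives S^-1 = S - T, hence X1 S = (S - T) X2 and
   X1 (S v) = mu S v - mu eta v.  If lam <> mu, some S v + a v is an eigenvector
   of X1 for mu unless S v = c v; then c^2 = c eta + 1 and comparing two
   expressions of X1 S v gives mu = c / (c - eta) * lam, where c / (c - eta) is
   a generator of Gamma. *)

From HB Require Import structures.
From mathcomp Require Import all_boot all_order all_algebra.
From mathcomp Require Import ring.
Set Implicit Arguments.
Unset Strict Implicit.
Unset Printing Implicit Defensive.
Import GRing.Theory.
Local Open Scope ring_scope.

Lemma closed_stablemx_eigenspace (K : closedFieldType) m n
    (E : 'M[K]_(m, n)) (M : 'M_n) :
  E != 0 -> stablemx E M -> exists a, (E :&: eigenspace M a)%MS != 0.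
Proof.
move=> E_neq0 EM; set C := restrictmx E M.
have /closed_rootP [a] : size (char_poly C) != 1%N.
  by rewrite size_char_poly eqSS mxrank_eq0.
rewrite -eigenvalue_root_char => /rowV0Pn [x xC x_neq0].
exists a; apply/rowV0Pn; exists (x *m row_base E).
  rewrite sub_capmx -sub_eigenspace_conjmx ?stablemx_row_base ?row_base_free //.
  by rewrite xC andbT (submx_trans (submxMl _ _)) ?eq_row_base.
by rewrite mulmx_free_eq0 ?row_base_free.
Qed.

Lemma comm_mx_stable_cap_eigenspace (K : fieldType) m n
    (E : 'M[K]_(m, n)) (M N : 'M_n) a :
  comm_mx M N -> stablemx E N -> stablemx (E :&: eigenspace M a)%MS N.
Proof.
move=> MN EN; rewrite sub_capmx; apply/andP; split.
  by apply: submx_trans EN; rewrite submxMr ?capmxSl.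
apply: submx_trans (comm_mx_stable_eigenspace a MN).
by rewrite submxMr ?capmxSr.
Qed.

Lemma trmx_comm_mx (R : comPzRingType) n (M N : 'M[R]_n) :
  comm_mx M N -> comm_mx M^T N^T.
Proof. by move=> MN; rewrite /comm_mx -!trmx_mul MN. Qed.

Lemma eigenspace_trmxP (K : fieldType) n (M : 'M[K]_n) a (w : 'rV_n) :
  reflect (M *m w^T = a *: w^T) (w <= eigenspace M^T a)%MS.
Proof.
apply: (iffP eigenspaceP) => [|Mw].
  by move=> wM; rewrite -[M]trmxK -trmx_mul wM linearZ.
by rewrite -[w]trmxK -trmx_mul Mw linearZ.
Qed.

Lemma is_eigval_trmx (K : fieldType) n (M : 'M[K]_n) a :
  is_eigval M a -> eigenvalue M^T a.
Proof.
case=> v v_neq0 Mv; apply/rowV0Pn; exists v^T; last by rewrite trmx_eq0.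
by apply/eigenspace_trmxP; rewrite trmxK.
Qed.

Lemma comm_mx_common_eigenvector (K : closedFieldType) n
    (M1 M2 M3 : 'M[K]_n) mu :
  comm_mx M1 M2 -> comm_mx M1 M3 -> comm_mx M2 M3 -> is_eigval M2 mu ->
  exists lam eta, exists2 v : 'cV_n, v != 0 &
    [/\ M1 *m v = lam *: v, M2 *m v = mu *: v & M3 *m v = eta *: v].
Proof.
move=> /trmx_comm_mx c12 /trmx_comm_mx c13 /trmx_comm_mx c23 /is_eigval_trmx E2.
have [lam E12] := closed_stablemx_eigenspace E2
  (comm_mx_stable_eigenspace mu (comm_mx_sym c12)).
have [eta E123] := closed_stablemx_eigenspace E12
  (comm_mx_stable_cap_eigenspace lam c13 (comm_mx_stable_eigenspace mu c23)).
have [w w_sub w_neq0] := rowV0Pn E123.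
exists lam, eta, w^T; first by rewrite trmx_eq0.
split; apply/eigenspace_trmxP; apply: submx_trans w_sub _.
- exact: submx_trans (capmxSl _ _) (capmxSr _ _).
- exact: submx_trans (capmxSl _ _) (capmxSl _ _).
- exact: capmxSr.
Qed.

Lemma scaler_injr (K : fieldType) (V : lmodType K) (v : V) :
  v != 0 -> injective ( *:%R^~ v : K -> V).
Proof.
move=> v_neq0 a b /eqP; rewrite -subr_eq0 -scalerBl scaler_eq0 (negbTE v_neq0).
by rewrite orbF subr_eq0 => /eqP.
Qed.

Section Representation.
Variables (K : fieldType) (k : comNzRingType) (f : k -> K) (IR IA : finType).
Variables (R : salg K IR) (A : salg k IA) (d : nat) (rho : J IR IA -> 'M[K]_d).
Local Notation rhoE := (rhoE rho).
Local Notation AAmul := (AAmul f R A).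
Local Notation AAone := (AAone f R A).

Lemma rhoE_AAztau z D : rhoE (AAztau f R z D) = f z *: rhoE (AAtau f R D).
Proof.
by rewrite /rhoE scaler_sumr; apply: eq_bigr => e _; rewrite ffunE scalerA.
Qed.

Lemma rhoE0 : rhoE 0 = 0.
Proof. by rewrite /rhoE big1 // => e _; rewrite ffunE scale0r. Qed.

Lemma rhoE_AAeval c p x :
  rhoE (AAeval f R A c p x) =
  \sum_(n < size p) p`_n *: rhoE (iter n (AAmul c) x).
Proof.
rewrite /rhoE; under eq_bigr do rewrite ffunE scaler_suml.
rewrite exchange_big; apply: eq_bigr => n _ /=.
by rewrite scaler_sumr; apply: eq_bigr => e _; rewrite scalerA.
Qed.

Hypotheses (rhoE1 : rhoE AAone = 1%:M)
  (rhoEM : forall x y, rhoE (AAmul x y) = rhoE x *m rhoE y).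

Lemma rhoE_AAeval_eigenvector c p (v : 'cV_d) a :
  rhoE c *m v = a *: v -> rhoE (AAeval f R A c p AAone) *m v = p.[a] *: v.
Proof.
move=> cv; have iter_v n : rhoE (iter n (AAmul c) AAone) *m v = a ^+ n *: v.
  elim: n => [|n IHn] /=; first by rewrite rhoE1 mul1mx scale1r.
  by rewrite rhoEM -mulmxA IHn -scalemxAr cv scalerA exprSr.
rewrite rhoE_AAeval mulmx_suml horner_coef scaler_suml.
by apply: eq_bigr => n _; rewrite -scalemxAl iter_v scalerA.
Qed.

Lemma minpoly_lmul_root c m (v : 'cV_d) a :
  is_minpoly_lmul f R A c m -> v != 0 -> rhoE c *m v = a *: v -> root m a.
Proof.
case=> _ m_ann _ v_neq0 cv; apply/eqP/(scaler_injr v_neq0).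
by rewrite -(rhoE_AAeval_eigenvector m cv) m_ann rhoE0 mul0mx scale0r.
Qed.

End Representation.

Section HeckeEigenvector.
Variables (K : fieldType) (d : nat) (X1 X2 S T : 'M[K]_d).
Hypotheses (S_quadratic : S *m S = T *m S + 1%:M) (S_X1_S : S *m X1 *m S = X2).
Variables (v : 'cV[K]_d) (lam mu eta : K).
Hypotheses (v_neq0 : v != 0) (X1v : X1 *m v = lam *: v)
  (X2v : X2 *m v = mu *: v) (Tv : T *m v = eta *: v).

Lemma mulmx_SsubT_S : (S - T) *m S = 1%:M.
Proof. by rewrite mulmxBl S_quadratic addrAC subrr add0r. Qed.

Lemma X1_Sv : X1 *m (S *m v) = mu *: (S *m v) - (mu * eta) *: v.
Proof.
have X1S : X1 *m S = (S - T) *m X2.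
  by rewrite -S_X1_S !mulmxA mulmx_SsubT_S mul1mx.
by rewrite mulmxA X1S -mulmxA X2v -scalemxAr mulmxBl Tv scalerBr scalerA.
Qed.

Lemma is_eigval_or_eigenvector :
  is_eigval X1 mu \/ exists c, S *m v = c *: v.
Proof.
have [<-|lam_neq_mu] := eqVneq lam mu; first by left; exists v.
pose a := mu * eta / (lam - mu); pose u := S *m v + a *: v.
have X1u : X1 *m u = mu *: u.
  rewrite mulmxDr X1_Sv -scalemxAr X1v scalerA scalerDr scalerA -addrA.
  congr (_ + _); rewrite -scaleNr -scalerDl; congr (_ *: _).
  by rewrite /a; field; rewrite subr_eq0.
have [u0|u_neq0] := eqVneq u 0; last by left; exists u.
by right; exists (- a); rewrite scaleNr; apply/eqP; rewrite -addr_eq0 -u0.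
Qed.

Variable c : K.
Hypothesis (Sv : S *m v = c *: v).

Lemma eigenvector_S_quadratic : c ^+ 2 - c * eta - 1 = 0.
Proof.
have -> : c ^+ 2 = c * eta + 1.
  apply: (scaler_injr v_neq0).
  rewrite expr2 -scalerA -Sv scalemxAr -Sv mulmxA S_quadratic mulmxDl mul1mx.
  by rewrite -mulmxA Sv -scalemxAr Tv scalerA scalerDl scale1r.
by ring.
Qed.

Lemma eigenvector_S_ratio : mu = c / (c - eta) * lam.
Proof.
have c_eta : c * (c - eta) = 1.
  by apply: subr0_eq; rewrite mulrBr -expr2 eigenvector_S_quadratic.
have c_eta_neq0 : c - eta != 0.
  by apply: contra_eq_neq c_eta => ->; rewrite mulr0 eq_sym oner_neq0.
have : c * lam = mu * (c - eta).
  apply: (scaler_injr v_neq0); rewrite -scalerA -X1v scalemxAr -Sv X1_Sv.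
  by rewrite Sv !scalerA -scalerBl mulrBr.
by move=> c_lam; rewrite mulrAC c_lam mulfK.
Qed.

End HeckeEigenvector.

Lemma Gamma_gen (K : fieldType) (m : {poly K}) g : GammaGen m g -> Gamma m g.
Proof. by move=> gen_g; rewrite -[g]mulr1; apply: igs_mul (igs_one _). Qed.

Theorem lemma8p3
  (K : closedFieldType) (k : comUnitRingType) (f : {rmorphism k -> K})
  (f_inj : injective f) (z : k) (z_unit : z \is a GRing.unit)
  (IA : finType) (A : salg k IA) (trA : IA -> k) (DA : IA -> IA -> k)
  (A_symfrob : is_symfrob A trA DA)
  (IR : finType) (R : salg K IR) (R_salg : is_salg R) (R_scomm : is_supercomm R)
  (m : {poly K})
  (m_min : is_minpoly_lmul f R A (AAztau f R z DA) m)
  (d : nat) (rho : J IR IA -> 'M[K]_d) (X1 X2 S : 'M[K]_d)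
  (V_mod : is_QAWA2_module f R A z DA rho X1 X2 S) :
  forall mu : K, is_eigval X2 mu ->
    exists lambda : K, is_eigval X1 lambda /\
      (mu = lambda \/ exists2 gamma : K, Gamma m gamma & mu = gamma * lambda).
Proof.
move=> mu X2mu.
case: V_mod => [[rhoE1 rhoEM] S_quadratic _ S_X1_S [_ _ X12 X_rho]].
pose ztau := AAztau f R z DA; set T := rhoE rho ztau.
have S_quadraticT : S *m S = T *m S + 1%:M.
  by rewrite /T rhoE_AAztau -scalemxAl.
have [lam [eta [v v_neq0 [X1v X2v Tv]]]] :=
  comm_mx_common_eigenvector X12 (X_rho ztau).1 (X_rho ztau).2 X2mu.
have eta_root : root m eta := minpoly_lmul_root rhoE1 rhoEM m_min v_neq0 Tv.
have [X1mu|[c Sv]] :=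
  is_eigval_or_eigenvector S_quadraticT S_X1_S v_neq0 X1v X2v Tv.
  by exists mu; split; [|left].
exists lam; split; first by exists v.
right; exists (c / (c - eta)).
  apply: Gamma_gen; exists c, eta; split=> //.
  exact: (eigenvector_S_quadratic S_quadraticT v_neq0 Tv Sv).
exact: (eigenvector_S_ratio S_quadraticT S_X1_S v_neq0 X1v X2v Tv Sv).
Qed.
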